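(* Let $K\ge 2$, $\eta>0$, and $\mathbf r\in\mathbb R^K$. For $\boldsymbol\theta\in\mathbb R^K$ let $\pi_{\boldsymbol\theta}(a)=\exp(\theta(a))/\sum_{b}\exp(\theta(b))$ be the softmax policy over $K$ actions and define $$\Phi_\eta(\boldsymbol\theta)=\pi_{\boldsymbol\theta}^\top\mathbf r+\frac1\eta\sum_{a}\log\pi_{\boldsymbol\theta}(a).$$ Let $H(\boldsymbol\theta)\in\mathbb R^{K\times K}$ be the Hessian of $\Phi_\eta$ at $\boldsymbol\theta$. Then for all $\boldsymbol\theta\in\mathbb R^K$, all $\mathbf r\in\mathbb R^K$ and all $\mathbf y\in\mathbb R^K$, $$\big|\mathbf y^\top H(\boldsymbol\theta)\mathbf y\big|\le 3\Big(\|\nabla_{\boldsymbol\theta}\Phi_\eta(\boldsymbol\theta)\|_2+\frac{5K}{\eta}\Big)\|\mathbf y\|_2^2 .$$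
   Context: $\Phi_\eta$ is the log-barrier regularized expected reward of a softmax policy in a $K$-armed bandit with mean reward vector $\mathbf r$; $1/\eta$ is the barrier strength. *)

From HB Require Import structures.
From mathcomp Require Import all_boot all_order all_algebra.
From mathcomp Require Import all_classical all_reals all_analysis.
Set Implicit Arguments. Unset Strict Implicit. Unset Printing Implicit Defensive.
Import Order.TTheory GRing.Theory Num.Theory.
Import numFieldNormedType.Exports.
Local Open Scope ring_scope.

Definition softmax (R : realType) (K : nat) (th : 'rV[R]_K) (a : 'I_K) : R :=
  expR (th 0 a) / \sum_(b < K) expR (th 0 b).

Definition Phi (R : realType) (K : nat) (eta : R) (r : 'rV[R]_K) (th : 'rV[R]_K) : R :=
  \sum_(a < K) softmax th a * r 0 a + eta^-1 * \sum_(a < K) ln (softmax th a).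

Definition ebasis (R : realType) (K : nat) (i : 'I_K) : 'rV[R]_K := delta_mx 0 i.

Definition grad (R : realType) (K : nat) (f : 'rV[R]_K -> R) (th : 'rV[R]_K) : 'rV[R]_K :=
  \row_i derive f th (ebasis R i).

Definition hessian (R : realType) (K : nat) (f : 'rV[R]_K -> R) (th : 'rV[R]_K) : 'M[R]_K :=
  \matrix_(i, j) derive (fun t => derive f t (ebasis R i)) th (ebasis R j).

Definition norm2 (R : realType) (K : nat) (v : 'rV[R]_K) : R :=
  Num.sqrt (\sum_(i < K) v 0 i ^+ 2).

Definition qform (R : realType) (K : nat) (H : 'M[R]_K) (y : 'rV[R]_K) : R :=
  (y *m H *m y^T) 0 0.

From mathcomp Require Import all_boot all_order all_algebra.
From mathcomp Require Import all_classical all_reals all_analysis.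
From mathcomp Require Import ring lra.
Import Order.TTheory GRing.Theory Num.Theory.
Import numFieldNormedType.Exports.
Local Open Scope ring_scope.

(* Write p = softmax theta, g_a = p_a (r_a - p^T r) and e = 1/eta. The gradient
   of Phi_eta is c = g + e (1 - K p) and its Hessian is
   diag (g - e K p) - (g p^T + p g^T) + e K p p^T, so that
   y^T H y = sum_a y_a^2 (g_a - e K p_a) - 2 (g^T y) (p^T y) + e K (p^T y)^2.
   As p is a probability vector, |p^T y| <= |y|, |g_a| <= |c| + e K, and writing
   g^T y = c^T y - e (sum_a y_a - K p^T y), Cauchy-Schwarz gives
   |g^T y| <= (|c| + 2 e K) |y|. The three terms are thus bounded by
   (|c| + 2 e K) |y|^2, 2 (|c| + 2 e K) |y|^2 and e K |y|^2, which add up to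
   3 |c| |y|^2 + 7 e K |y|^2. *)

Lemma sum_mul_delta {R : pzSemiRingType} {K : nat} (F : 'I_K -> R) (j : 'I_K) :
  \sum_(i < K) F i * (i == j)%:R = F j.
Proof.
by rewrite (bigD1 j) //= eqxx mulr1 big1 ?addr0 // => i /negbTE ->; rewrite mulr0.
Qed.

Lemma lagrange_identity {R : comPzRingType} {K : nat} (u v : 'I_K -> R) :
  \sum_(i < K) \sum_(j < K) (u i * v j - u j * v i) ^+ 2 =
  2 * ((\sum_(i < K) u i ^+ 2) * (\sum_(i < K) v i ^+ 2)
       - (\sum_(i < K) u i * v i) ^+ 2).
Proof.
have expand i j : (u i * v j - u j * v i) ^+ 2 =
    u i ^+ 2 * v j ^+ 2 + u j ^+ 2 * v i ^+ 2 - 2 * ((u i * v i) * (u j * v j)).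
  by ring.
under eq_bigr do under eq_bigr do rewrite expand.
under eq_bigr do rewrite sumrB big_split /=.
rewrite sumrB big_split /= [in RHS]expr2 !big_distrlr /=.
rewrite [X in _ + X - _ = _]exchange_big /=.
under [X in _ - X = _]eq_bigr do rewrite -mulr_sumr.
rewrite -mulr_sumr; ring.
Qed.

Lemma quad_form_sum {R : comPzRingType} {K : nat} (H : 'M[R]_K) (y : 'rV[R]_K) :
  (y *m H *m y^T) 0 0 = \sum_(i < K) \sum_(j < K) y 0 i * H i j * y 0 j.
Proof.
rewrite mxE; under eq_bigr do rewrite mxE big_distrl.
by rewrite exchange_big; apply: eq_bigr => i _; apply: eq_bigr => j _; rewrite mxE.
Qed.

Lemma quad_form_diag_rank2 {R : comPzRingType} {K : nat} {H : 'M[R]_K}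
    {a g p : 'I_K -> R} {k : R} (y : 'rV[R]_K) :
  (forall i j, H i j = (i == j)%:R * a i - (g i * p j + p i * g j) + k * (p i * p j)) ->
  (y *m H *m y^T) 0 0 =
    \sum_(i < K) y 0 i ^+ 2 * a i
    - 2 * (\sum_(i < K) g i * y 0 i) * (\sum_(i < K) p i * y 0 i)
    + k * (\sum_(i < K) p i * y 0 i) ^+ 2.
Proof.
move=> HE; rewrite quad_form_sum.
set G := \sum_(i < K) g i * y 0 i; set P := \sum_(i < K) p i * y 0 i.
have row i : \sum_(j < K) y 0 i * H i j * y 0 j =
    y 0 i ^+ 2 * a i - (g i * y 0 i * P + p i * y 0 i * G) + k * (p i * y 0 i) * P.
  rewrite (eq_bigr (fun j => y 0 i * a i * y 0 j * (j == i)%:R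
      - (g i * y 0 i * (p j * y 0 j) + p i * y 0 i * (g j * y 0 j))
      + k * (p i * y 0 i) * (p j * y 0 j))); last by move=> j _; rewrite HE eq_sym; ring.
  by rewrite big_split sumrB big_split /= sum_mul_delta -!mulr_sumr -/G -/P; ring.
under eq_bigr do rewrite row.
by rewrite big_split sumrB big_split /= -!mulr_suml -mulr_sumr -/G -/P; ring.
Qed.

Section ProbabilityVector.
Context {R : realDomainType} {K : nat} {p : 'I_K -> R}.
Hypotheses (p_ge0 : forall i, 0 <= p i) (p_sum1 : \sum_(i < K) p i = 1).

Lemma prob_le1 i : p i <= 1.
Proof. by rewrite -p_sum1 (bigD1 i) //= lerDl sumr_ge0. Qed.

Lemma prob_card_ge1 : 1 <= K%:R :> R.
Proof.
have -> : K%:R = \sum_(i < K) 1 :> R by rewrite sumr_const card_ord.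
rewrite -[leLHS]p_sum1; apply: ler_sum => i _; exact: prob_le1.
Qed.

Lemma normr_prob_avg_le (x : 'I_K -> R) (M : R) :
  (forall i, `|x i| <= M) -> `|\sum_(i < K) p i * x i| <= M.
Proof.
move=> xM; rewrite -[M in _ <= M]mul1r -p_sum1 mulr_suml.
apply: le_trans (ler_norm_sum _ _ _) _; apply: ler_sum => i _.
by rewrite normrM ger0_norm // ler_wpM2l.
Qed.

End ProbabilityVector.

Section L2Norm.
Context {R : rcfType} {K : nat}.
Implicit Types u v : 'I_K -> R.

Definition l2norm u : R := Num.sqrt (\sum_(i < K) u i ^+ 2).

Lemma sumsqr_ge0 u : 0 <= \sum_(i < K) u i ^+ 2.
Proof. by apply: sumr_ge0 => i _; exact: sqr_ge0. Qed.

Lemma sqr_l2norm u : l2norm u ^+ 2 = \sum_(i < K) u i ^+ 2.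
Proof. by rewrite sqr_sqrtr // sumsqr_ge0. Qed.

Lemma normr_le_l2norm u i : `|u i| <= l2norm u.
Proof.
rewrite -sqrtr_sqr ler_wsqrtr // (bigD1 i) //= lerDl.
by apply: sumr_ge0 => j _; exact: sqr_ge0.
Qed.

Lemma cauchy_schwarz u v : `|\sum_(i < K) u i * v i| <= l2norm u * l2norm v.
Proof.
rewrite -sqrtrM ?sumsqr_ge0 // -sqrtr_sqr ler_wsqrtr //.
have : 0 <= \sum_(i < K) \sum_(j < K) (u i * v j - u j * v i) ^+ 2.
  by apply: sumr_ge0 => i _; exact: sumsqr_ge0.
rewrite lagrange_identity; lra.
Qed.

End L2Norm.

Section SoftmaxHessianBound.
Context {R : rcfType} {K : nat} {p : 'I_K -> R} (g : 'I_K -> R) {e : R}.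
Hypotheses (p_ge0 : forall i, 0 <= p i) (p_sum1 : \sum_(i < K) p i = 1)
  (e_ge0 : 0 <= e).

Local Notation c := (fun i => g i + e * (1 - K%:R * p i)).
Local Notation N := (l2norm c).

Lemma eK_ge0 : 0 <= e * K%:R.
Proof. by rewrite mulr_ge0 ?ler0n. Qed.

Lemma normr_g_le i : `|g i| <= N + e * K%:R.
Proof.
have -> : g i = c i - e * (1 - K%:R * p i) by ring.
apply: le_trans (ler_normB _ _) _; apply: lerD; first exact: (normr_le_l2norm c).
rewrite normrM ger0_norm // ler_wpM2l // ler_norml.
have Kp_ge0 : 0 <= K%:R * p i by rewrite mulr_ge0 ?ler0n.
have Kp_le : K%:R * p i <= K%:R by rewrite ler_piMr ?ler0n // prob_le1.
have K_ge1 := prob_card_ge1 p_ge0 p_sum1.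
by apply/andP; split; lra.
Qed.

Lemma normr_diag_le (y : 'I_K -> R) :
  `|\sum_(i < K) y i ^+ 2 * (g i - e * K%:R * p i)|
    <= (N + 2 * (e * K%:R)) * l2norm y ^+ 2.
Proof.
rewrite sqr_l2norm mulr_sumr; apply: le_trans (ler_norm_sum _ _ _) _.
apply: ler_sum => i _; rewrite normrM ger0_norm ?sqr_ge0 // mulrC ler_wpM2r ?sqr_ge0 //.
apply: le_trans (ler_normB _ _) _.
rewrite normrM (ger0_norm eK_ge0) (ger0_norm (p_ge0 i)).
have := normr_g_le i; have := ler_wpM2l eK_ge0 (prob_le1 p_ge0 p_sum1 i).
rewrite mulr1; lra.
Qed.

Lemma normr_dot_le (y : 'I_K -> R) :
  `|\sum_(i < K) g i * y i| <= (N + 2 * (e * K%:R)) * l2norm y.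
Proof.
set s := l2norm y; set P := \sum_(i < K) p i * y i.
have -> : \sum_(i < K) g i * y i =
    \sum_(i < K) c i * y i - e * (\sum_(i < K) y i - K%:R * P).
  rewrite /P mulr_sumr -!sumrB mulr_sumr -sumrB; apply: eq_bigr => i _; ring.
have P_le : `|P| <= s by apply: normr_prob_avg_le => // i; exact: normr_le_l2norm.
have sum_le : `|\sum_(i < K) y i| <= K%:R * s.
  apply: le_trans (ler_norm_sum _ _ _) _.
  have -> : K%:R * s = \sum_(i < K) s by rewrite sumr_const card_ord mulr_natl.
  by apply: ler_sum => i _; exact: normr_le_l2norm.
apply: le_trans (ler_normB _ _) _.
have := cauchy_schwarz c y; rewrite normrM ger0_norm //.
have : `|\sum_(i < K) y i - K%:R * P| <= 2 * (K%:R * s).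
  apply: le_trans (ler_normB _ _) _; rewrite normrM ger0_norm ?ler0n //.
  have := ler_wpM2l (ler0n R K) P_le; lra.
move=> /(ler_wpM2l e_ge0); rewrite -/s; lra.
Qed.

Lemma softmax_hessian_quad_le (y : 'I_K -> R) :
  `|\sum_(i < K) y i ^+ 2 * (g i - e * K%:R * p i)
    - 2 * (\sum_(i < K) g i * y i) * (\sum_(i < K) p i * y i)
    + e * K%:R * (\sum_(i < K) p i * y i) ^+ 2|
  <= 3 * (N + 5 * K%:R * e) * l2norm y ^+ 2.
Proof.
set s := l2norm y; set G := \sum_(i < K) g i * y i; set P := \sum_(i < K) p i * y i.
have P_le : `|P| <= s by apply: normr_prob_avg_le => // i; exact: normr_le_l2norm.
have GP_le : `|G| * `|P| <= (N + 2 * (e * K%:R)) * s * s.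
  by apply: ler_pM => //; exact: normr_dot_le.
have P2_le : e * K%:R * P ^+ 2 <= e * K%:R * s ^+ 2.
  by rewrite ler_wpM2l ?eK_ge0 // -real_normK ?num_real // !expr2 ler_pM.
have norm_GP : `|2 * G * P| = 2 * (`|G| * `|P|) by rewrite -mulrA !normrM ger0_norm.
have norm_P2 : `|e * K%:R * P ^+ 2| = e * K%:R * P ^+ 2.
  by rewrite ger0_norm // mulr_ge0 ?eK_ge0 ?sqr_ge0.
have := normr_diag_le y; rewrite -/s.
have := ler_normD (\sum_(i < K) y i ^+ 2 * (g i - e * K%:R * p i) - 2 * G * P)
                  (e * K%:R * P ^+ 2).
have := ler_normB (\sum_(i < K) y i ^+ 2 * (g i - e * K%:R * p i)) (2 * G * P).
rewrite norm_GP norm_P2.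
have : 0 <= e * K%:R * s ^+ 2 by rewrite mulr_ge0 ?eK_ge0 ?sqr_ge0.
lra.
Qed.

End SoftmaxHessianBound.

(* The library rules are stated for the ring operations on functions
   ([f * g], [\sum_i h i]), which do not unify with the lambda terms below. *)
Section PointwiseDerive.
Context {R : numFieldType} {V : normedModType R}.
Implicit Types (f g : V -> R) (x v : V).

Lemma is_derive_mul {f g x v df dg} : is_derive x v f df -> is_derive x v g dg ->
  is_derive x v (fun t => f t * g t) (f x * dg + g x * df).
Proof. by move=> fx gx; have := is_deriveM fx gx. Qed.

Lemma is_derive_add {f g x v df dg} : is_derive x v f df -> is_derive x v g dg ->
  is_derive x v (fun t => f t + g t) (df + dg).
Proof. by move=> fx gx; have := is_deriveD fx gx. Qed.

Lemma is_derive_sub {f g x v df dg} : is_derive x v f df -> is_derive x v g dg ->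
  is_derive x v (fun t => f t - g t) (df - dg).
Proof. by move=> fx gx; have := is_deriveB fx gx. Qed.

Lemma is_derive_sumr {n} {h : 'I_n -> V -> R} {x v} {dh : 'I_n -> R} :
  (forall i, is_derive x v (h i) (dh i)) ->
  is_derive x v (fun t => \sum_(i < n) h i t) (\sum_(i < n) dh i).
Proof.
move=> hx; have -> : (fun t => \sum_(i < n) h i t) = \sum_(i < n) h i.
  by apply/funext => t; rewrite fct_sumE.
exact: is_derive_sum.
Qed.

Lemma is_derive_inv {f x v df} : f x != 0 -> is_derive x v f df ->
  is_derive x v (fun t => (f t)^-1) (- (f x) ^- 2 * df).
Proof.
move=> fx0 [fd <-]; apply: DeriveDef; first exact: derivableV.
by rewrite deriveV.
Qed.

End PointwiseDerive.

Section ChainRule.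
Context {R : realType} {V : normedModType R}.

Lemma derive_along_line (f : V -> R) x v :
  'D_v f x = 'D_1 (fun h : R => f (h *: v + x)) 0.
Proof.
rewrite /derive; set g1 := fun h => h^-1 *: _; set g2 := fun h => h^-1 *: _.
suff -> : g1 = g2 by [].
by apply/funext => h; rewrite /g1 /g2 /= addr0 scale0r add0r [_%:A]mulr1.
Qed.

Lemma is_derive_comp1 {f : V -> R} {g : R -> R} {x v df dg} :
  is_derive x v f df -> is_derive (f x) 1 g dg -> is_derive x v (g \o f) (dg * df).
Proof.
move=> [fd fv] gd.
have line_f : is_derive (0 : R) 1 (fun h : R => f (h *: v + x)) df.
  by apply: DeriveDef; [exact: (derivable1P f x v).1 | rewrite -derive_along_line].
have gd' : is_derive ((fun h : R => f (h *: v + x)) 0) 1 g dg.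
  by rewrite /= scale0r add0r.
have [gfd gfv] := is_derive1_comp gd' line_f.
by apply: DeriveDef; [exact: (derivable1P (g \o f) x v).2 | rewrite derive_along_line].
Qed.

End ChainRule.

Section SoftmaxDerivative.
Context {R : realType} {K : nat}.
Implicit Types (t w : 'rV[R]_K) (a : 'I_K) (x : 'I_K -> R).

Lemma is_derive_coord t w a : is_derive t w (fun t : 'rV[R]_K => t 0 a) (w 0 a).
Proof.
have id_d : derivable (@id 'rV[R]_K) t w by exact: derivable_id.
apply: DeriveDef; first by move/derivable_mxP: id_d; apply.
by have := derive_mx id_d; rewrite derive_id => w_eq; rewrite [in RHS]w_eq mxE.
Qed.

Lemma sum_expR_gt0 t a : 0 < \sum_(b < K) expR (t 0 b).
Proof.
rewrite (bigD1 a) //= ltr_pwDl ?expR_gt0 //.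
by apply: sumr_ge0 => b _; exact: expR_ge0.
Qed.

Lemma softmax_gt0 t a : 0 < softmax t a.
Proof. by rewrite divr_gt0 ?expR_gt0 ?(sum_expR_gt0 t a). Qed.

Lemma sum_softmax t : (0 < K)%N -> \sum_(a < K) softmax t a = 1.
Proof.
move=> K_gt0; rewrite -mulr_suml divff //.
exact: lt0r_neq0 (sum_expR_gt0 t (Ordinal K_gt0)).
Qed.

Definition softmax_avg t x : R := \sum_(a < K) softmax t a * x a.

Lemma is_derive_softmax t w a :
  is_derive t w (fun t => softmax t a) (softmax t a * (w 0 a - softmax_avg t (w 0))).
Proof.
have dexp b : is_derive t w (fun t => expR (t 0 b)) (expR (t 0 b) * w 0 b).
  exact: is_derive_comp1 (is_derive_coord t w b) (is_derive_expR _).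
have S_neq0 := lt0r_neq0 (sum_expR_gt0 t a).
apply: is_derive_eq
  (is_derive_mul (dexp a) (is_derive_inv S_neq0 (is_derive_sumr dexp))) _.
rewrite /softmax_avg /softmax; set S := \sum_(b < K) expR (t 0 b).
have -> : \sum_(b < K) expR (t 0 b) / S * w 0 b = (\sum_(b < K) expR (t 0 b) * w 0 b) / S.
  by rewrite mulr_suml; apply: eq_bigr => b _; rewrite mulrAC.
by field.
Qed.

Lemma is_derive_softmax_avg t w x :
  is_derive t w (fun t => softmax_avg t x)
    (softmax_avg t (fun a => (x a - softmax_avg t x) * w 0 a)).
Proof.
have dterm a := is_derive_mul (is_derive_softmax t w a) (is_derive_cst (x a) t w).
apply: is_derive_eq (is_derive_sumr dterm) _; rewrite /softmax_avg.
under eq_bigr do rewrite mulr0 add0r.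
set W := \sum_(a < K) _ * w 0 a; set X := \sum_(a < K) _ * x a.
rewrite (eq_bigr (fun a => softmax t a * x a * w 0 a - W * (softmax t a * x a)));
  last by move=> a _; rewrite /cst; ring.
rewrite [RHS](eq_bigr (fun a => softmax t a * x a * w 0 a - X * (softmax t a * w 0 a)));
  last by move=> a _; ring.
by rewrite !sumrB -!mulr_sumr -/W -/X mulrC.
Qed.

End SoftmaxDerivative.

Section RegularizedObjective.
Context {R : realType} {K : nat} (eta : R) (r : 'rV[R]_K).
Implicit Types (t w : 'rV[R]_K) (a i j : 'I_K).

Definition reward_grad t a : R := softmax t a * (r 0 a - softmax_avg t (r 0)).

Definition Phi_grad t a : R := reward_grad t a + eta^-1 * (1 - K%:R * softmax t a).

Lemma is_derive_Phi t w :
  is_derive t w (Phi eta r) (\sum_(a < K) Phi_grad t a * w 0 a).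
Proof.
have dln a : is_derive t w (fun t => ln (softmax t a)) (w 0 a - softmax_avg t (w 0)).
  apply: is_derive_eq (is_derive_comp1 (is_derive_softmax t w a)
    (is_derive1_ln (softmax_gt0 t a))) _.
  by rewrite mulKf // lt0r_neq0 // softmax_gt0.
apply: is_derive_eq (is_derive_add (is_derive_softmax_avg t w (r 0))
  (is_derive_mul (is_derive_cst eta^-1 t w) (is_derive_sumr dln))) _.
rewrite mulr0 addr0 sumrB sumr_const card_ord /Phi_grad /reward_grad /softmax_avg /cst.
set rbar := \sum_(b < K) _ * r 0 b; set W := \sum_(b < K) _ * w 0 b.
rewrite [RHS](eq_bigr (fun a => softmax t a * ((r 0 a - rbar) * w 0 a)
    + eta^-1 * w 0 a - eta^-1 * K%:R * (softmax t a * w 0 a))); last by move=> a _; ring.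
by rewrite sumrB big_split /= -!mulr_sumr -/W -mulr_natl; ring.
Qed.

Lemma ebasisE i a : ebasis R i 0 a = (a == i)%:R.
Proof. by rewrite mxE eqxx. Qed.

Lemma sum_mul_ebasis (F : 'I_K -> R) i : \sum_(a < K) F a * ebasis R i 0 a = F i.
Proof. by under eq_bigr do rewrite ebasisE; exact: sum_mul_delta. Qed.

Lemma derive_Phi_ebasis t i : 'D_(ebasis R i) (Phi eta r) t = Phi_grad t i.
Proof. by have [_ ->] := is_derive_Phi t (ebasis R i); rewrite sum_mul_ebasis. Qed.

Lemma grad_Phi t : grad (Phi eta r) t = \row_a Phi_grad t a.
Proof. by apply/rowP => a; rewrite !mxE derive_Phi_ebasis. Qed.

Lemma is_derive_Phi_grad t w i :
  is_derive t w (fun t => Phi_grad t i)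
    ((w 0 i - softmax_avg t (w 0)) * (reward_grad t i - eta^-1 * K%:R * softmax t i)
     - softmax t i * \sum_(a < K) reward_grad t a * w 0 a).
Proof.
have dp := is_derive_softmax t w i.
have dcst (c : R) := is_derive_cst c t w.
apply: is_derive_eq (is_derive_add
  (is_derive_mul dp (is_derive_sub (dcst (r 0 i)) (is_derive_softmax_avg t w (r 0))))
  (is_derive_mul (dcst eta^-1) (is_derive_sub (dcst 1) (is_derive_mul (dcst K%:R) dp)))) _.
have -> : softmax_avg t (fun a => (r 0 a - softmax_avg t (r 0)) * w 0 a)
    = \sum_(a < K) reward_grad t a * w 0 a.
  by apply: eq_bigr => a _; rewrite mulrA.
by rewrite /reward_grad /cst; ring.
Qed.

Lemma hessian_Phi t i j :
  hessian (Phi eta r) t i j =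
    (i == j)%:R * (reward_grad t i - eta^-1 * K%:R * softmax t i)
    - (reward_grad t i * softmax t j + softmax t i * reward_grad t j)
    + eta^-1 * K%:R * (softmax t i * softmax t j).
Proof.
rewrite mxE (_ : (fun t => 'D_(ebasis R i) (Phi eta r) t) = Phi_grad^~ i); last first.
  by apply/funext => u; rewrite derive_Phi_ebasis.
have [_ ->] := is_derive_Phi_grad t (ebasis R j) i.
by rewrite /softmax_avg !sum_mul_ebasis ebasisE; ring.
Qed.

End RegularizedObjective.

Theorem lemma4p1 (R : realType) (K : nat) (hK : (2 <= K)%N) (eta : R) (heta : 0 < eta)
  (r th y : 'rV[R]_K) :
  `| qform (hessian (Phi eta r) th) y |
    <= 3 * (norm2 (grad (Phi eta r) th) + 5 * K%:R / eta) * norm2 y ^+ 2.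
Proof.
have p_ge0 a : 0 <= softmax th a := ltW (softmax_gt0 th a).
have p_sum1 := sum_softmax th (ltnW hK).
have e_ge0 : 0 <= eta^-1 by rewrite invr_ge0 ltW.
have grad_norm : norm2 (grad (Phi eta r) th) = l2norm (Phi_grad eta r th).
  by rewrite grad_Phi; congr Num.sqrt; apply: eq_bigr => a _; rewrite mxE.
rewrite /qform (quad_form_diag_rank2 y (hessian_Phi eta r th)) grad_norm.
exact (softmax_hessian_quad_le (reward_grad r th) p_ge0 p_sum1 e_ge0 (y 0)).
Qed.
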